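(* Let $S$ be a string of length $n$ over a totally ordered alphabet, let $i\in[1,n]$ and $j=\mathrm{nss}[i]\ne n+1$. If $\mathrm{rlce}(i,j)\ge j-i$, then $\mathrm{rlce}(j,j+(j-i))=\mathrm{rlce}(i,j)-(j-i)$ and $\mathrm{nss}[j]=j+(j-i)$.
   Context: For $i\in[1,n+1]$, $S_i=S[i..n]$ ($S_{n+1}$ is the empty string); $\prec$ is the induced lexicographical order. $\mathrm{nss}[i]=\min\{j \mid j=n+1 \text{ or } (j\in(i,n] \text{ and } S_i\succ S_j)\}$ for $i\in[1,n]$. $\mathrm{rlce}(a,b)$ is the length of the longest common prefix of $S_a$ and $S_b$. *)

From mathcomp Require Import all_boot all_order.
Set Implicit Arguments. Unset Strict Implicit. Unset Printing Implicit Defensive.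
Import Order.TTheory.
Local Open Scope order_scope.

(* Strings over a totally ordered alphabet T are sequences [seq T];
   positions are 1-based: S[i] = nth _ S (i-1). *)

Section Strings.
Context {disp : Order.disp_t} {T : orderType disp}.

Fixpoint lexlt (s t : seq T) : bool :=
  match s, t with
  | _, [::] => false
  | [::], _ :: _ => true
  | x :: s', y :: t' => (x < y) || ((x == y) && lexlt s' t')
  end.

Definition suf (S : seq T) (i : nat) : seq T := drop i.-1 S.

(* nss[i] = min { j | j = n+1 or (i < j <= n and S_i > S_j) }. *)
Definition nss (S : seq T) (i : nat) : nat :=
  head (size S).+1 [seq j <- iota i.+1 (size S - i) | lexlt (suf S j) (suf S i)].

Fixpoint lcp (s t : seq T) : nat :=
  match s, t with
  | x :: s', y :: t' => if x == y then (lcp s' t').+1 else 0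
  | _, _ => 0
  end.

Definition rlce (S : seq T) (a b : nat) : nat := lcp (suf S a) (suf S b).

End Strings.

(* Let d = j - i and u = S[i..j-1]. As rlce(i,j) >= d, S_i = u S_j and
   S_j = u S_(j+d); cancelling the common prefix u gives
   rlce(i,j) = d + rlce(j,j+d), and turns S_j < S_i into S_(j+d) < S_j.
   It remains that no S_(j+e) with 0 < e < d is smaller than S_j. Compare
   u with its first e letters dropped, p, to the prefix q of u of the same
   length d - e: if p <> q, then S_(j+e) vs S_j is decided by p vs q,
   exactly like S_(i+e) vs S_i; if p = q, then S_(i+e) >= S_i forces
   S_j >= S_(i+d-e) >= S_i > S_j. *)

From mathcomp Require Import all_boot all_order zify.

Import Order.TTheory.
Set Implicit Arguments. Unset Strict Implicit. Unset Printing Implicit Defensive.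

Lemma head_filter (X : Type) (a : pred X) (x0 : X) (s : seq X) :
  head x0 (filter a s) = nth x0 s (find a s).
Proof. by elim: s => //= x s IH; case: (a x). Qed.

Lemma nth_iota_default (m n k : nat) : k <= n -> nth (m + n) (iota m n) k = m + k.
Proof.
rewrite leq_eqVlt => /orP[/eqP-> | /nth_iota-> //].
by rewrite nth_default ?size_iota.
Qed.

Lemma find_eqP (X : Type) (x0 : X) (a : pred X) (s : seq X) (k : nat) :
  find a s = k <->
  [/\ k <= size s, k < size s -> a (nth x0 s k)
    & forall l, l < k -> ~~ a (nth x0 s l)].
Proof.
split=> [<- | []].
  split=> [||l lt_l]; first exact: find_size.
    by rewrite -has_find; apply: nth_find.
  by rewrite before_find.
elim: s k => [|x s IH] [|k] //= k_le a_k before_k.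
  by rewrite a_k.
have /negbTE-> := before_k 0 isT.
by rewrite (IH k) // => l l_lt_k; apply: (before_k l.+1).
Qed.

Section Strings.
Context {disp : Order.disp_t} {T : orderType disp}.
Implicit Types (s t p q S : seq T).

Lemma lexlt_cat2l p s t : lexlt (p ++ s) (p ++ t) = lexlt s t.
Proof. by elim: p => //= x p ->; rewrite ltxx eqxx. Qed.

Lemma lexlt_cat_neq p q s t :
  size p = size q -> p != q -> lexlt (p ++ s) (q ++ t) = lexlt p q.
Proof.
elim: p q => [|x p IH] [|y q] //= [size_pq].
by rewrite eqseq_cons negb_and; case: eqP => //= _ /IH->.
Qed.

Lemma lexlt_cotrans s t p : lexlt s p -> lexlt s t || lexlt t p.
Proof.
elim: s t p => [|x s IH] [|y t] [|z p] //=.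
case/orP => [lt_xz | /andP[/eqP<- /IH lt_stp]]; case: (ltgtP x y) => //= [lt_yx | <-].
- by rewrite (lt_trans lt_yx lt_xz).
- by rewrite lt_xz orbT.
Qed.

Lemma lcp_cat2l p s t : lcp (p ++ s) (p ++ t) = size p + lcp s t.
Proof. by elim: p => //= x p ->; rewrite eqxx. Qed.

Lemma lcp_le_size s t : lcp s t <= size s.
Proof. by elim: s t => [|x s IH] [|y t] //=; case: eqP => // _; rewrite ltnS IH. Qed.

Lemma take_lcp k s t : k <= lcp s t -> take k s = take k t.
Proof.
elim: s t k => [|x s IH] [|y t] [|k] //=.
by case: eqP => // -> /IH->.
Qed.

Definition shift_min s m := forall e, 0 < e < m -> ~~ lexlt (drop e s) s.

Lemma shift_min_period u v :
  lexlt (u ++ v) (u ++ u ++ v) -> shift_min (u ++ u ++ v) (size u) ->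
  shift_min (u ++ v) (size u).
Proof.
move=> lt_uv min_uuv e /andP[e_gt0 e_lt].
set r := size u - e.
have drop_catl k w : k < size u -> drop k (u ++ w) = drop k u ++ w.
  by move=> k_lt; rewrite drop_cat k_lt.
have split_at_r w : u ++ w = take r u ++ (drop r u ++ w).
  by rewrite catA cat_take_drop.
have min_e : ~~ lexlt (drop e u ++ u ++ v) (u ++ u ++ v).
  by rewrite -drop_catl //; apply: min_uuv; lia.
have min_r : ~~ lexlt (drop r u ++ u ++ v) (u ++ u ++ v).
  by rewrite -drop_catl; [apply: min_uuv|]; lia.
rewrite (split_at_r (u ++ v)) in min_e.
rewrite drop_catl // (split_at_r v).
case: (eqVneq (drop e u) (take r u)) => [eq_pq | neq_pq].
  rewrite eq_pq lexlt_cat2l in min_e.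
  by have := lexlt_cotrans (drop r u ++ u ++ v) lt_uv; rewrite (negbTE min_e) (negbTE min_r).
have size_pq : size (drop e u) = size (take r u) by rewrite size_drop size_takel; lia.
by rewrite !lexlt_cat_neq // in min_e *.
Qed.

Lemma suf_addn S i m : 0 < i -> suf S (i + m) = drop m (suf S i).
Proof. by move=> i_gt0; rewrite /suf drop_drop; congr drop; lia. Qed.

Definition is_nss S i j := [/\ i < j <= (size S).+1,
  j <= size S -> lexlt (suf S j) (suf S i)
  & forall k, i < k < j -> ~~ lexlt (suf S k) (suf S i)].

Lemma nssE S i : i <= size S ->
  nss S i = i.+1 + find (fun j => lexlt (suf S j) (suf S i)) (iota i.+1 (size S - i)).
Proof.
move=> i_le; rewrite /nss head_filter.
have -> : (size S).+1 = i.+1 + (size S - i) by lia.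
by rewrite nth_iota_default // -[X in _ <= X](size_iota i.+1) find_size.
Qed.

Lemma nssP S i j : i <= size S -> nss S i = j <-> is_nss S i j.
Proof.
move=> i_le; rewrite nssE //.
set P := fun j => _; set s := iota _ _.
have size_s : size s = size S - i by rewrite size_iota.
have nth_s l : l < size S - i -> nth 0 s l = i.+1 + l by move=> l_lt; rewrite nth_iota.
split=> [<- | [/andP[lt_ij j_le] P_j before_j]].
  have [] := (find_eqP 0 P s (find P s)).1 erefl; rewrite size_s => f_le P_f before_f.
  split=> [||k /andP[lt_ik lt_kj]]; first lia.
    by move=> f_lt; rewrite -nth_s; [apply: P_f|]; lia.
  by have := before_f (k - i.+1); rewrite nth_s; [rewrite subnKC; [apply|]|]; lia.
suff -> : find P s = j - i.+1 by lia.
apply/(find_eqP 0); rewrite size_s; split=> [|f_lt|l l_lt]; first lia.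
  by rewrite nth_s ?subnKC; [apply: P_j|..]; lia.
by rewrite nth_s; [apply: before_j|]; lia.
Qed.

End Strings.

Theorem lemma10 (disp : Order.disp_t) (T : orderType disp) (S : seq T) (i : nat) :
  (1 <= i <= size S)%N ->
  nss S i <> (size S).+1 ->
  (nss S i - i <= rlce S i (nss S i))%N ->
  rlce S (nss S i) (nss S i + (nss S i - i)) = (rlce S i (nss S i) - (nss S i - i))%N /\
  nss S (nss S i) = (nss S i + (nss S i - i))%N.
Proof.
move=> /andP[i_gt0 i_le]; rewrite /rlce.
have [/andP[lt_ij j_le] lt_ji min_j] := (nssP (nss S i) i_le).1 erefl.
set j := nss S i in lt_ij j_le lt_ji min_j *; set d := j - i.
move=> j_neq d_le.
set A := suf S i in lt_ji min_j d_le *; set u := take d A.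
set B := suf S j in lt_ji d_le *; set C := suf S (j + d).
have B_drop : B = drop d A by rewrite /A -suf_addn // subnKC // ltnW.
have A_eq : A = u ++ B by rewrite B_drop cat_take_drop.
have B_eq : B = u ++ C by rewrite /u (take_lcp d_le) /C suf_addn ?cat_take_drop //; lia.
have size_u : size u = d by rewrite size_takel // (leq_trans d_le) ?lcp_le_size.
have lt_CB : lexlt (u ++ C) (u ++ u ++ C) by rewrite -B_eq -A_eq lt_ji //; lia.
have min_A : shift_min (u ++ u ++ C) (size u).
  by move=> e e_range; rewrite -B_eq -A_eq -suf_addn //; apply: min_j; lia.
have min_B := shift_min_period lt_CB min_A.
split; first by rewrite A_eq [X in _ = lcp _ X - _]B_eq lcp_cat2l size_u addKn.
apply/nssP; first lia.
split=> [|_|k /andP[lt_jk lt_k]].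
- have := congr1 size B_eq; rewrite size_cat size_u /B /suf size_drop; lia.
- by rewrite lexlt_cat2l -B_eq in lt_CB.
- rewrite -(subnKC (ltnW lt_jk)) suf_addn -/B; last lia.
  by rewrite B_eq; apply: min_B; lia.
Qed.
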